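(* Let $k\ge 2$ be an integer and $D$ a strongly connected digraph with no directed cycle of length congruent to $1$ modulo $k$. Let $T$ be a DFS tree of $D$ rooted at $r$, of length $t$, with levels $V_0,\ldots,V_t$. For $s\in\{0,1,\ldots,k-1\}$ let $U_s=\bigcup_{0\le i\le t,\ i\equiv s \pmod k} V_i$. Then $U_0,\ldots,U_{k-1}$ form a partition of $V(D)$ into acyclic sets.
   Context: Digraphs are finite and loopless; paths and cycles are directed; $l(\cdot)$ denotes length. A DFS tree $T$ of a strongly connected digraph $D$ rooted at $r$ is the spanning out-branching produced by a depth-first search started at $r$. $P_u$ is the unique $ru$-path in $T$; the length $t$ of $T$ is the length of a longest path in $T$; the levels are $V_i=\{u: l(P_u)=i\}$, $0\le i\le t$. A set of vertices is acyclic if it induces no directed cycle. *)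

From mathcomp Require Import all_boot.
Set Implicit Arguments. Unset Strict Implicit. Unset Printing Implicit Defensive.

(* A digraph on a finite vertex type V is an arc relation D : rel V
   (loopless = irreflexive D). *)

(* A directed cycle: a nonempty duplicate-free sequence c of vertices with
   arcs c_0 -> c_1 -> ... -> c_{m-1} -> c_0; its length is size c. *)
Definition dicycle (V : finType) (D : rel V) (c : seq V) : bool :=
  [&& c != [::], uniq c & cycle D c].

Definition strongly_connected (V : finType) (D : rel V) : Prop :=
  forall u v : V, connect D u v.

Definition acyclic_set (V : finType) (D : rel V) (A : V -> Prop) : Prop :=
  forall c : seq V, dicycle D c -> ~ (forall x, x \in c -> A x).

(* Depth-first search, with arbitrary choice of the next unvisited
   out-neighbour.  State: list of visited vertices, the DFS stack (top first),
   and the list of tree arcs created so far. *)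
Inductive dfs_state (V : finType) (D : rel V) (r : V) :
    seq V -> seq V -> seq (V * V) -> Prop :=
| dfs_init : dfs_state D r [:: r] [:: r] [::]
| dfs_advance vis st arcs u v :
    dfs_state D r vis (u :: st) arcs -> D u v -> v \notin vis ->
    dfs_state D r (v :: vis) (v :: u :: st) ((u, v) :: arcs)
| dfs_retreat vis st arcs u :
    dfs_state D r vis (u :: st) arcs -> (forall v, D u v -> v \in vis) ->
    dfs_state D r vis st arcs.

Definition dfs_tree (V : finType) (D : rel V) (r : V) (T : rel V) : Prop :=
  exists vis arcs, dfs_state D r vis [::] arcs /\
    forall u v, T u v = ((u, v) \in arcs).

Definition tree_depth (V : finType) (T : rel V) (r u : V) (i : nat) : Prop :=
  exists p : seq V, [/\ path T r p, last r p = u & size p = i].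

Definition tree_length (V : finType) (T : rel V) (t : nat) : Prop :=
  (exists x p, path T x p /\ uniq (x :: p) /\ size p = t) /\
  (forall x p, path T x p -> uniq (x :: p) -> size p <= t).

Definition level (V : finType) (T : rel V) (r : V) (i : nat) (u : V) : Prop :=
  tree_depth T r u i.

From mathcomp Require Import all_boot.
Set Implicit Arguments. Unset Strict Implicit.

(* Run the DFS while recording the order [fin] in which vertices are finished.
   The classical invariant is that every arc [x -> y] either ends at a vertex
   finished before [x] or is a back arc, [y] being a tree ancestor of [x].  A
   back arc between two vertices whose depths agree mod k closes, together
   with the tree path from [y] to [x], a cycle of length 1 mod k.  Hence every
   arc inside a class U_s ends at a vertex finished earlier, and U_s is
   acyclic.  The classes partition V because every vertex is reached (strong
   connectivity) along a unique tree path from [r] (tree arcs have in-degree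
   one and none enters [r]). *)

Lemma acyclic_set_rank (V : finType) (D : rel V) (A : V -> Prop) (f : V -> nat) :
  (forall x y, A x -> A y -> D x y -> f x < f y) -> acyclic_set D A.
Proof.
move=> f_mono [//|x p] /and3P [_ _ Dc] Ac.
have f_path : path (relpre f ltn) x (rcons p x).
  apply: (@sub_in_path _ (mem (x :: p)) D) Dc.
    by move=> a b /Ac Aa /Ac; exact: f_mono.
  by apply/allP => z; rewrite in_cons mem_rcons orbA orbb.
have f_trans : transitive (relpre f ltn) by move=> b a c; exact: ltn_trans.
have /allP/(_ x) := order_path_min f_trans f_path.
by rewrite mem_rcons mem_head /= ltnn => /(_ isT).
Qed.

Section TreeArcs.

Variables (V : eqType) (arcs : seq (V * V)).

Definition tree_rel : rel V := fun a b => (a, b) \in arcs.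

Definition tree_ancestor (y x : V) : Prop :=
  exists p, [/\ path tree_rel y p, last y p = x & p != [::]].

Lemma tree_ancestor_arc a b : (a, b) \in arcs -> tree_ancestor a b.
Proof. by move=> ab; exists [:: b]; rewrite /= /tree_rel ab. Qed.

Lemma tree_ancestor_trans x y z :
  tree_ancestor x y -> tree_ancestor y z -> tree_ancestor x z.
Proof.
case=> p [xp <- p0] [q [yq <- _]]; exists (p ++ q).
by rewrite cat_path last_cat xp yq; split=> //; case: p p0 {xp yq}.
Qed.

Lemma tree_ancestor_stack x s y :
  path (fun a b => (b, a) \in arcs) x s -> y \in s -> tree_ancestor y x.
Proof.
elim: s x => [//|z s IHs] x /= /andP [zx zs].
rewrite in_cons => /predU1P [-> | ys]; first exact: tree_ancestor_arc.
exact: tree_ancestor_trans (IHs _ zs ys) (tree_ancestor_arc zx).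
Qed.

Lemma tree_ancestor_out_arc y x : tree_ancestor y x -> exists b, (y, b) \in arcs.
Proof. by case=> [[|b p]] [] //= /andP [yb _] _ _; exists b. Qed.

End TreeArcs.

Lemma tree_rel_cons (V : eqType) (arcs : seq (V * V)) e :
  subrel (tree_rel arcs) (tree_rel (e :: arcs)).
Proof. by move=> a b; rewrite /tree_rel in_cons => ->; rewrite orbT. Qed.

Lemma tree_ancestor_cons (V : eqType) (arcs : seq (V * V)) e y x :
  tree_ancestor arcs y x -> tree_ancestor (e :: arcs) y x.
Proof.
by case=> p [yp px p0]; exists p; rewrite (sub_path (@tree_rel_cons _ _ e)).
Qed.

Section DepthFirstSearch.

Variables (V : finType) (D : rel V) (r : V).

(* [vis] lists the visited vertices and [fin] the finished ones, most recent
   first; so tree arcs point to vertices of smaller index in [vis], and an arc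
   [x -> y] with [index x fin < index y fin] ends at a vertex finished before
   [x].  The stack, top first, is a tree path read backwards. *)
Record dfs_inv (vis st : seq V) (arcs : seq (V * V)) (fin : seq V) : Prop :=
  DfsInv {
  dfs_uniq : uniq (st ++ fin);
  dfs_visited : vis =i st ++ fin;
  dfs_root : r \in vis;
  dfs_arc a b : (a, b) \in arcs ->
    [/\ D a b, a \in vis, b \in vis & index b vis < index a vis];
  dfs_parent_unique a b c : (a, b) \in arcs -> (c, b) \in arcs -> a = c;
  dfs_root_parentless a : (a, r) \notin arcs;
  dfs_reach x : x \in vis -> exists p, path (tree_rel arcs) r p /\ last r p = x;
  dfs_stack : path (fun a b => (b, a) \in arcs) (head r st) (behead st);
  dfs_finished x y : x \in fin -> D x y ->
    (y \in fin /\ index x fin < index y fin) \/ tree_ancestor arcs y x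
}.

Lemma dfs_inv_init : dfs_inv [:: r] [:: r] [::] [::].
Proof.
split=> //; rewrite ?mem_head //.
by move=> x; rewrite mem_seq1 => /eqP ->; exists [::].
Qed.

Lemma dfs_inv_advance vis st arcs fin u v :
  dfs_inv vis (u :: st) arcs fin -> D u v -> v \notin vis ->
  dfs_inv (v :: vis) (v :: u :: st) ((u, v) :: arcs) fin.
Proof.
move=> I Duv v_vis; have u_vis : u \in vis by rewrite (dfs_visited I) mem_head.
have vis_neq_v x : x \in vis -> (v == x) = false.
  by move=> x_vis; apply: contraNF v_vis => /eqP ->.
have old_arc a b : (a, b) \in arcs -> v != b.
  by case/(dfs_arc I) => _ _ b_vis _; rewrite vis_neq_v.
split.
- by rewrite cat_cons cons_uniq -(dfs_visited I) v_vis (dfs_uniq I).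
- by move=> x; rewrite !in_cons (dfs_visited I).
- by rewrite in_cons (dfs_root I) orbT.
- move=> a b; rewrite in_cons => /predU1P [[-> ->] | ab].
    by split; rewrite ?in_cons ?u_vis ?eqxx ?orbT //= eqxx vis_neq_v.
  case: (dfs_arc I ab) => Dab a_vis b_vis lt_ba.
  by split; rewrite ?in_cons ?a_vis ?b_vis ?orbT //= !vis_neq_v.
- move=> a b c; rewrite !in_cons.
  case/predU1P => [[-> ->] | ab].
    by case/predU1P => [[->] // | /old_arc]; rewrite eqxx.
  case/predU1P => [[_ Eb] | cb]; last exact: (dfs_parent_unique I ab cb).
  by move/old_arc: ab; rewrite Eb eqxx.
- move=> a; rewrite in_cons negb_or (dfs_root_parentless I) andbT.
  by apply: contraNneq v_vis => -[_ <-]; exact: dfs_root I.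
- move=> x; rewrite in_cons => /predU1P [-> | x_vis].
    have [p [rp pu]] := dfs_reach I u_vis.
    exists (rcons p v); rewrite last_rcons rcons_path pu /tree_rel mem_head andbT.
    by rewrite (sub_path (@tree_rel_cons _ _ (u, v)) rp).
  have [p [rp px]] := dfs_reach I x_vis.
  by exists p; rewrite (sub_path (@tree_rel_cons _ _ (u, v)) rp).
- rewrite /= mem_head; apply: sub_path (dfs_stack I) => a b ba.
  by rewrite in_cons ba orbT.
- move=> x y x_fin Dxy; case: (dfs_finished I x_fin Dxy) => [? | ?]; first by left.
  by right; apply: tree_ancestor_cons.
Qed.

Hypothesis D_irr : irreflexive D.

Lemma dfs_inv_retreat vis st arcs fin u :
  dfs_inv vis (u :: st) arcs fin -> (forall v, D u v -> v \in vis) ->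
  dfs_inv vis st arcs (u :: fin).
Proof.
move=> I u_done; have st_fin_uniq := dfs_uniq I.
rewrite cat_cons cons_uniq mem_cat negb_or in st_fin_uniq.
case/andP: st_fin_uniq => /andP [u_st u_fin] _.
have u_neq z : z \in fin -> (u == z) = false.
  by move=> z_fin; apply: contraNF u_fin => /eqP ->.
split; try exact: dfs_root I; try exact: dfs_arc I; try exact: dfs_parent_unique I;
  try exact: dfs_root_parentless I; try exact: dfs_reach I.
- by rewrite -cat1s uniq_catCA cat1s -cat_cons (dfs_uniq I).
- by move=> x; rewrite (dfs_visited I) !(mem_cat, in_cons) -orbA orbCA.
- by move: (dfs_stack I); case: (st) => [|z s] //= /andP [].
move=> x y; rewrite in_cons => /predU1P [-> Duy | x_fin Dxy].
  have := u_done _ Duy; rewrite (dfs_visited I) in_cons mem_cat.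
  case/or3P => [/eqP yu | y_st | y_fin].
  - by rewrite yu D_irr in Duy.
  - by right; exact: tree_ancestor_stack (dfs_stack I) y_st.
  - by left; rewrite in_cons y_fin orbT /= eqxx u_neq.
case: (dfs_finished I x_fin Dxy) => [[y_fin lt_xy] | ?]; last by right.
by left; rewrite in_cons y_fin orbT /= !u_neq.
Qed.

Lemma dfs_state_inv vis st arcs :
  dfs_state D r vis st arcs -> exists fin, dfs_inv vis st arcs fin.
Proof.
elim=> [| {}vis {}st {}arcs u v _ [fin I] Duv v_vis
        | {}vis {}st {}arcs u _ [fin I] u_done].
- by exists [::]; exact: dfs_inv_init.
- by exists fin; exact: dfs_inv_advance.
- by exists (u :: fin); exact: dfs_inv_retreat.
Qed.

Section Invariant.

Variables (vis st : seq V) (arcs : seq (V * V)) (fin : seq V).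
Hypothesis I : dfs_inv vis st arcs fin.

Lemma tree_path_uniq x p : path (tree_rel arcs) x p -> uniq (x :: p).
Proof.
move=> xp; apply: (@sorted_uniq _ (fun a b => index b vis < index a vis)).
- by move=> b a c ab bc; exact: ltn_trans bc ab.
- by move=> a; rewrite ltnn.
by apply: sub_path xp => a b /(dfs_arc I) [].
Qed.

Lemma root_tree_path_unique p q :
  path (tree_rel arcs) r p -> path (tree_rel arcs) r q -> last r p = last r q ->
  p = q.
Proof.
have no_arc_to_root a : tree_rel arcs a r = false.
  exact: negbTE (dfs_root_parentless I a).
elim/last_ind: p q => [|p a IHp] q; case/lastP: q => [|q b] //;
  rewrite ?rcons_path ?last_rcons /=.
- by move=> _ /andP [_] /[swap] <-; rewrite no_arc_to_root.
- by move=> /andP [_ +] _ ar; rewrite ar no_arc_to_root.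
move=> /andP [rp pa] /andP [rq qb] ab; rewrite -{}ab in qb *.
by rewrite (IHp q rp rq (dfs_parent_unique I pa qb)).
Qed.

End Invariant.

End DepthFirstSearch.

Section CompleteSearch.

Variables (V : finType) (D : rel V) (r : V) (T : rel V).
Variables (vis : seq V) (arcs : seq (V * V)) (fin : seq V).
Hypotheses (I : dfs_inv D r vis [::] arcs fin) (T_arcs : T =2 tree_rel arcs).

Lemma finished_arc x y : x \in fin -> D x y -> y \in fin.
Proof.
move=> x_fin Dxy.
case: (dfs_finished I x_fin Dxy) => [[] // | /tree_ancestor_out_arc [b]].
by case/(dfs_arc I) => _ y_vis _ _; rewrite -(dfs_visited I).
Qed.

Hypothesis D_sc : strongly_connected D.

Lemma finished_all u : u \in fin.
Proof.
have /connectP [p Dp ->] := D_sc r u.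
have : r \in fin by rewrite -(dfs_visited I) (dfs_root I).
elim: p r Dp => [//|y p IHp] x /= /andP [Dxy Dp] x_fin.
exact: IHp Dp (finished_arc x_fin Dxy).
Qed.

Lemma level_tree_path i u :
  level T r i u <->
  exists p, [/\ path (tree_rel arcs) r p, last r p = u & size p = i].
Proof. by split=> -[p [Tp pu pi]]; exists p; rewrite (eq_path T_arcs) in Tp *. Qed.

Lemma level_exists u : exists i, level T r i u.
Proof.
have u_vis : u \in vis by rewrite (dfs_visited I) finished_all.
have [p [rp pu]] := dfs_reach I u_vis.
by exists (size p); apply/level_tree_path; exists p.
Qed.

Lemma level_unique i j u : level T r i u -> level T r j u -> i = j.
Proof.
move=> /level_tree_path [p [rp pu <-]] /level_tree_path [q [rq qu <-]].
by rewrite (root_tree_path_unique I rp rq) // pu qu.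
Qed.

Lemma level_le_length t i u : tree_length T t -> level T r i u -> i <= t.
Proof.
move=> [_ longest] /level_tree_path [p [rp _ <-]].
by apply: longest (tree_path_uniq I rp); rewrite (eq_path T_arcs).
Qed.

Lemma class_arc_finished_before k i j x y :
  1 < k -> (forall c, dicycle D c -> size c %% k != 1) ->
  level T r i x -> level T r j y -> i = j %[mod k] -> D x y ->
  index x fin < index y fin.
Proof.
move=> k_gt1 no_cycle Lx Ly eq_ij Dxy.
case: (dfs_finished I (finished_all x) Dxy) => [[] // | [p [yp px p0]]].
have /level_tree_path [q [rq qy qj]] := Ly; rewrite -{}qj in eq_ij.
have Lx' : level T r (size q + size p) x.
  apply/level_tree_path; exists (q ++ p).
  by rewrite cat_path last_cat size_cat qy rq yp px.
have p_mod : size p = 0 %[mod k].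
  by apply/eqP; rewrite -(eqn_modDl (size q)) addn0 -(level_unique Lx Lx') eq_ij.
have cycle_yp : dicycle D (y :: p).
  rewrite /dicycle (tree_path_uniq I yp) /= rcons_path px Dxy andbT.
  by apply: sub_path yp => a b /(dfs_arc I) [].
move: (no_cycle _ cycle_yp).
by rewrite /= -addn1 -modnDml p_mod mod0n add0n modn_small.
Qed.

End CompleteSearch.

Theorem mainTheorem12 (V : finType) (D : rel V) (k : nat) (r : V) (T : rel V)
    (t : nat) :
  2 <= k ->
  irreflexive D ->
  strongly_connected D ->
  (forall c : seq V, dicycle D c -> size c %% k != 1) ->
  dfs_tree D r T ->
  tree_length T t ->
  let U := fun (s : nat) (u : V) =>
    exists i, [/\ i <= t, i %% k = s & level T r i u] in
  (forall u : V, exists! s, s < k /\ U s u) /\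
  (forall s, s < k -> acyclic_set D (U s)).
Proof.
move=> k_gt1 D_irr D_sc no_cycle [vis [arcs [run T_arcs]]] T_len U.
have [fin I] := dfs_state_inv D_irr run.
split=> [u | s _].
  have [i Li] := level_exists I T_arcs D_sc u.
  exists (i %% k); split=> [|s [_ [j [_ <- Lj]]]].
    split; first by rewrite ltn_pmod // ltnW.
    by exists i; rewrite (level_le_length I T_arcs T_len Li).
  by rewrite (level_unique I T_arcs Li Lj).
apply: (@acyclic_set_rank _ _ _ (index^~ fin)).
move=> x y [i [_ <- Lx]] [j [_ ij Ly]].
exact: (class_arc_finished_before I T_arcs D_sc k_gt1 no_cycle Lx Ly (esym ij)).
Qed.
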